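(* Let $f,g$ be real analytic functions on $[-1,1]$, and for $\rho\in\mathbb{R}$ with $|\rho|$ sufficiently small let $x(t,\rho)$ denote the solution on $[-1,1]$ of the Abel equation $x'=f(t)x^3+g(t)x^2$ with $x(-1,\rho)=\rho$. Define $$H(t,\rho)=\int_{-1}^t\big(f(s)x(s,\rho)+g(s)\big)\,ds,\qquad G(t)=\int_{-1}^t g(s)\,ds,\qquad F(t)=\int_{-1}^t f(s)\,ds.$$ Then $$\frac{\partial^{j}}{\partial\rho^{j}}H(1,\rho)\Big|_{\rho=0}=j!\int_{-1}^1 f(t)\,G^{j-1}(t)\,dt\quad\text{for } j=1,2,$$ and $$\frac{\partial^{3}}{\partial\rho^{3}}H(1,\rho)\Big|_{\rho=0}=3!\int_{-1}^1 f(t)\,G^{2}(t)\,dt+3!\int_{-1}^1 f(t)\,F(t)\,dt.$$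
   Context: The solution $x(t,\rho)$ is analytic in $(t,\rho)$ and equivalently satisfies the integral equation $x(t,\rho)=\dfrac{\rho}{1-\rho H(t,\rho)}$ for $t\in[-1,1]$ and $|\rho|$ small. *)

From Stdlib Require Import Reals.
From Coquelicot Require Import Coquelicot.
Open Scope R_scope.

Definition analytic_at (f : R -> R) (t0 : R) : Prop :=
  exists (a : nat -> R) (r : R), 0 < r /\
    forall y, Rabs (y - t0) < r -> is_pseries a (y - t0) (f y).

Definition analytic_on_I (f : R -> R) : Prop :=
  forall t0, -1 <= t0 <= 1 -> analytic_at f t0.

Definition abel_solution (f g : R -> R) (y : R -> R) (rho : R) : Prop :=
  y (-1) = rho /\
  (forall t, -1 <= t <= 1 ->
     filterlim y (within (fun s => -1 <= s <= 1) (locally t)) (locally (y t))) /\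
  (forall t, -1 < t < 1 ->
     is_derive y t (f t * (y t) ^ 3 + g t * (y t) ^ 2)).

Definition Hfun (f g : R -> R) (x : R -> R -> R) (t rho : R) : R :=
  RInt (fun s => f s * x s rho + g s) (-1) t.

Definition prim (h : R -> R) (t : R) : R := RInt h (-1) t.

From Stdlib Require Import Reals Lra Lia Wf_nat.
From Coquelicot Require Import Coquelicot.
Open Scope R_scope.

(* Write the solution as a power series [x(t, rho) = sum_n c_n(t) rho^n].  Substituting it into
   [x' = f x^3 + g x^2] gives [c_1 = 1] and, for [n >= 2],
   [c_n(t) = int_{-1}^t (f (c*c*c)_n + g (c*c)_n)], where, as [c_0 = 0], the right-hand side
   only involves [c_1], ..., [c_{n-1}]; in particular [c_2 = G] and [c_3 = F + G^2].  Once [f]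
   and [g] are extended continuously and boundedly to the whole line, the weights [w_n = 1/n^2],
   which satisfy [(w*w)_n <= 8 w_n], give by induction [|c_n(t)| <= A B^n w_n] for [|t| <= 2]
   and suitable constants [A], [B].
   Hence the series converges for [|rho| < 1/B], may be differentiated termwise in [t], and solves
   the Abel equation; by uniqueness (a Gronwall argument) it is the solution [x].  Integrating
   termwise, [H(1, rho) = G(1) + sum_n rho^n int_{-1}^1 f c_n] is analytic at [0], so its [j]-th
   derivative there is [j! int_{-1}^1 f c_j]. *)

(** * Power series *)

Lemma ex_pseries_le_CV_radius (a : nat -> R) (x : R) :
  ex_pseries a x -> Rbar_le (Rabs x) (CV_radius a).
Proof.
  intros Hx. apply Rbar_not_lt_le. intros Hlt. apply (CV_disk_outside a x Hlt).
  apply ex_series_lim_0 in Hx.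
  eapply is_lim_seq_ext; [|exact Hx]. intros n. apply Rmult_comm.
Qed.

Lemma CV_radius_gt_of_geom_bound (a : nat -> R) (K B x : R) : 0 < B ->
  (forall n, Rabs (a n) <= K * B ^ n) -> Rabs x < / B -> Rbar_lt (Rabs x) (CV_radius a).
Proof.
  intros HB Ha Hx.
  assert (HiB : 0 < / B) by now apply Rinv_0_lt_compat.
  assert (Hle : Rbar_le (/ B) (CV_radius a)).
  { apply (proj1 (CV_radius_bounded a)). exists K. intros n.
    rewrite Rabs_mult, <- RPow_abs, (Rabs_right (/ B)) by lra.
    apply Rle_trans with (K * B ^ n * (/ B) ^ n).
    - apply Rmult_le_compat_r; [apply pow_le; lra | apply Ha].
    - rewrite Rmult_assoc, <- Rpow_mult_distr, Rinv_r, pow1 by lra. lra. }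
  destruct (CV_radius a) as [c| |]; simpl in *; auto. lra.
Qed.

Lemma is_pseries_single (k : nat) (c x : R) :
  is_pseries (fun n => if (n =? k)%nat then c else 0) x (c * x ^ k).
Proof.
  set (u := fun n => (if (n =? k)%nat then c else 0) * x ^ n).
  assert (Hlow : forall N, (N < k)%nat -> sum_f_R0 u N = 0).
  { induction N as [|N IH]; intros HN; simpl; [|rewrite IH by lia]; unfold u;
      replace (_ =? k)%nat with false by (symmetry; apply Nat.eqb_neq; lia); ring. }
  assert (Hhigh : forall N, (k <= N)%nat -> sum_f_R0 u N = c * x ^ k).
  { induction N as [|N IH]; intros HN.
    - assert (k = 0%nat) by lia. subst k. simpl. unfold u; simpl. ring.
    - simpl. destruct (Nat.eq_dec k (S N)) as [->|Hne].
      + rewrite Hlow by lia. unfold u. rewrite Nat.eqb_refl. ring.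
      + rewrite IH by lia. unfold u.
        replace (S N =? k)%nat with false by (symmetry; apply Nat.eqb_neq; lia). ring. }
  unfold is_pseries, is_series.
  apply (filterlim_ext_loc (fun _ => c * x ^ k)).
  - exists k. intros N HN. rewrite <- (Hhigh N HN), <- sum_n_Reals. apply sum_n_ext. intros n.
    unfold u, scal; simpl; unfold mult; simpl. apply Rmult_comm.
  - apply filterlim_const.
Qed.

Lemma PS_mult_Rabs_le (a b a' b' : nat -> R) (n : nat) :
  (forall k, (k <= n)%nat -> Rabs (a k) <= a' k) ->
  (forall k, (k <= n)%nat -> Rabs (b k) <= b' k) ->
  Rabs (PS_mult a b n) <= PS_mult a' b' n.
Proof.
  intros Ha Hb. unfold PS_mult. eapply Rle_trans; [apply sum_f_R0_triangle|].
  apply sum_Rle. intros k Hk. rewrite Rabs_mult.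
  apply Rmult_le_compat; try apply Rabs_pos; [apply Ha | apply Hb]; lia.
Qed.

Lemma PS_mult_ext_lt (a a' b b' : nat -> R) (n : nat) :
  a 0%nat = 0 -> a' 0%nat = 0 -> b 0%nat = 0 -> b' 0%nat = 0 ->
  (forall i, (1 <= i < n)%nat -> a i = a' i) ->
  (forall i, (1 <= i < n)%nat -> b i = b' i) ->
  PS_mult a b n = PS_mult a' b' n.
Proof.
  intros Ha0 Ha0' Hb0 Hb0' Ha Hb. unfold PS_mult. apply sum_eq. intros k Hk.
  destruct (Nat.eq_dec k 0) as [->|Hk0]; [rewrite Ha0, Ha0'; ring|].
  destruct (Nat.eq_dec k n) as [->|Hkn]; [rewrite Nat.sub_diag, Hb0, Hb0'; ring|].
  rewrite Ha, Hb by lia. reflexivity.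
Qed.

Lemma continuous_PS_mult (a b : nat -> R -> R) (n : nat) (x : R) :
  (forall k, (k <= n)%nat -> continuous (a k) x) ->
  (forall k, (k <= n)%nat -> continuous (b k) x) ->
  continuous (fun y => PS_mult (fun i => a i y) (fun i => b i y) n) x.
Proof.
  intros Ha Hb. unfold PS_mult.
  assert (Hsum : forall m, (m <= n)%nat ->
            continuous (fun y => sum_f_R0 (fun k => a k y * b (n - k)%nat y) m) x).
  { induction m as [|m IH]; intros Hm; simpl.
    - apply (continuous_mult (K := R_AbsRing)); [apply Ha | apply Hb]; lia.
    - apply (continuous_plus (V := R_NormedModule)); [apply IH; lia|].
      apply (continuous_mult (K := R_AbsRing)); [apply Ha | apply Hb]; lia. }
  apply Hsum. lia.
Qed.

Lemma Rabs_mult_pow_le_geom (u rho K B : R) (n : nat) : Rabs u <= K * B ^ n ->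
  Rabs (u * rho ^ n) <= K * (B * Rabs rho) ^ n.
Proof.
  intros Hu. rewrite Rabs_mult, <- RPow_abs, Rpow_mult_distr, <- Rmult_assoc.
  apply Rmult_le_compat_r; [apply pow_le, Rabs_pos | exact Hu].
Qed.

Lemma is_series_geom_scal (K q : R) :
  Rabs q < 1 -> is_series (fun n => K * q ^ n) (K * / (1 - q)).
Proof. intros Hq. apply (is_series_scal K (fun n => q ^ n)). now apply is_series_geom. Qed.

Lemma is_derive_Series_dominated (u u' : nat -> R -> R) (K q r t : R) :
  0 <= q < 1 ->
  (forall n y, Rabs y < r -> is_derive (u n) y (u' n y)) ->
  (forall n y, Rabs y < r -> Rabs (u n y) <= K * q ^ n) ->
  (forall n y, Rabs y < r -> Rabs (u' n y) <= K * q ^ n) ->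
  Rabs t < r ->
  is_derive (fun y => Series (fun n => u n y)) t (Series (fun n => u' n t)).
Proof.
  intros Hq Hd Hu Hu' Ht.
  assert (Hr : 0 < r) by (pose proof (Rabs_pos t); lra).
  assert (Hgeom := is_series_geom_scal K q ltac:(rewrite Rabs_right; lra)).
  assert (Hcvn : CVN_r u' (mkposreal r Hr)).
  { exists (fun n => K * q ^ n), (K * / (1 - q)). split.
    - apply is_series_Reals in Hgeom. intros eps Heps. destruct (Hgeom eps Heps) as [N HN].
      exists N. intros n Hn. rewrite (sum_eq _ (fun n => K * q ^ n)); [apply HN; auto|].
      intros i _. apply Rabs_right, Rle_ge. eapply Rle_trans; [apply Rabs_pos | apply (Hu' i t Ht)].
    - intros n y Hy. apply Hu'. unfold Boule in Hy. simpl in Hy. rewrite Rminus_0_r in Hy.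
      exact Hy. }
  destruct (CVN_CVU_r u' (mkposreal r Hr) Hcvn t Ht) as [e He].
  assert (Hd0 : 0 < Rmin e (r - Rabs t)) by (apply Rmin_pos; [apply cond_pos | lra]).
  assert (Hball : forall y, Boule t (mkposreal _ Hd0) y -> Rabs y < r).
  { intros y Hy. unfold Boule in Hy. simpl in Hy. pose proof (Rmin_r e (r - Rabs t)).
    pose proof (Rabs_triang (y - t) t). replace (y - t + t) with y in * by ring. lra. }
  apply is_derive_Reals.
  apply (CVU_derivable (SP u) (SP u') (fun y => Series (fun n => u n y))
           (fun y => Series (fun n => u' n y)) t (mkposreal _ Hd0)).
  - intros eps Heps. destruct (He eps Heps) as [N HN]. exists N. intros n y Hn Hy.
    apply HN; auto. unfold Boule in *. simpl in Hy. pose proof (Rmin_l e (r - Rabs t)). lra.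
  - intros y Hy. apply is_series_Reals, Series_correct.
    apply (ex_series_le (V := R_CompleteNormedModule) _ (fun n => K * q ^ n));
      [intros n; apply Hu, Hball, Hy|].
    eexists; exact Hgeom.
  - intros n y Hy. apply is_derive_Reals. unfold SP.
    rewrite <- sum_n_Reals. apply (is_derive_ext (fun y => sum_n (fun k => u k y) n)).
    + intros z. apply sum_n_Reals.
    + apply (is_derive_sum_n (V := R_NormedModule)). intros k _. apply Hd, Hball, Hy.
  - unfold Boule. rewrite Rminus_diag, Rabs_R0. apply cond_pos.
Qed.

Lemma analytic_at_continuous (f : R -> R) (t0 : R) : analytic_at f t0 -> continuous f t0.
Proof.
  intros [a [r [Hr Ha]]].
  assert (Hrad : Rbar_lt 0 (CV_radius a)).
  { assert (Hle : Rbar_le (Rabs (r / 2)) (CV_radius a)).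
    { apply ex_pseries_le_CV_radius. exists (f (t0 + r / 2)).
      assert (Hhalf := Ha (t0 + r / 2)). replace (t0 + r / 2 - t0) with (r / 2) in Hhalf by ring.
      apply Hhalf. rewrite Rabs_right; lra. }
    rewrite Rabs_right in Hle by lra.
    destruct (CV_radius a) as [c| |]; simpl in *; auto. lra. }
  apply continuous_ext_loc with (g := fun y => PSeries a (y - t0)).
  - exists (mkposreal r Hr). intros y Hy. apply is_pseries_unique, Ha, Hy.
  - apply (continuous_comp (fun y => y - t0) (PSeries a)).
    + apply (continuous_minus (V := R_NormedModule));
        [apply continuous_id | apply continuous_const].
    + rewrite Rminus_diag. apply continuity_pt_filterlim, PSeries_continuity.
      rewrite Rabs_R0. exact Hrad.
Qed.

(** * Functions on an interval and uniqueness for ODEs *)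

Definition clamp (a b s : R) : R := Rmax a (Rmin b s).

Lemma clamp_in (a b s : R) : a <= b -> a <= clamp a b s <= b.
Proof. unfold clamp, Rmax, Rmin. repeat destruct Rle_dec; lra. Qed.

Lemma clamp_id (a b s : R) : a <= s <= b -> clamp a b s = s.
Proof. unfold clamp, Rmax, Rmin. repeat destruct Rle_dec; lra. Qed.

Lemma continuous_clamp (a b s : R) : continuous (clamp a b) s.
Proof.
  apply filterlim_locally. intros eps. exists eps. intros y Hy.
  change (Rabs (y - s) < eps) in Hy. change (Rabs (clamp a b y - clamp a b s) < eps).
  apply Rle_lt_trans with (Rabs (y - s)); [|exact Hy].
  unfold clamp, Rmax, Rmin. repeat destruct Rle_dec; unfold Rabs; repeat destruct Rcase_abs; lra.
Qed.

Lemma continuous_comp_clamp (y : R -> R) (a b s : R) : a <= b ->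
  (forall t, a <= t <= b ->
     filterlim y (within (fun s => a <= s <= b) (locally t)) (locally (y t))) ->
  continuous (fun s => y (clamp a b s)) s.
Proof.
  intros Hab Hy.
  apply filterlim_comp with (G := within (fun s => a <= s <= b) (locally (clamp a b s))).
  - intros P HP. assert (Hc := continuous_clamp a b s _ HP). unfold filtermap in *.
    eapply filter_imp; [|exact Hc]. intros z Hz. apply Hz, clamp_in, Hab.
  - apply Hy, clamp_in, Hab.
Qed.

Lemma is_derive_comp_clamp (y : R -> R) (a b t l : R) : a < t < b ->
  is_derive y t l -> is_derive (fun s => y (clamp a b s)) t l.
Proof.
  intros Ht Hy. apply (is_derive_ext_loc y); [|exact Hy].
  assert (Hd : 0 < Rmin (t - a) (b - t)) by (apply Rmin_pos; lra).
  exists (mkposreal _ Hd). intros s Hs. change (Rabs (s - t) < Rmin (t - a) (b - t)) in Hs.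
  pose proof (Rmin_l (t - a) (b - t)). pose proof (Rmin_r (t - a) (b - t)).
  rewrite clamp_id; [reflexivity|]. unfold Rabs in Hs; destruct Rcase_abs in Hs; lra.
Qed.

Lemma continuous_bounded_on (h : R -> R) (a b : R) : a <= b ->
  (forall t, a <= t <= b -> continuous h t) ->
  exists K, 0 <= K /\ forall t, a <= t <= b -> Rabs (h t) <= K.
Proof.
  intros Hab Hh.
  destruct (continuity_ab_maj (fun s => Rabs (h s)) a b Hab) as [m [Hm _]].
  - intros s Hs. apply continuity_pt_filterlim, continuous_Rabs_comp, Hh, Hs.
  - exists (Rabs (h m)). split; [apply Rabs_pos | exact Hm].
Qed.

Lemma Rabs_le_between_neg1 (t s : R) :
  Rabs t <= 2 -> Rmin (-1) t <= s <= Rmax (-1) t -> Rabs s <= 2.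
Proof. unfold Rmin, Rmax. destruct Rle_dec; unfold Rabs; repeat destruct Rcase_abs; lra. Qed.

Lemma is_derive_RInt_continuous (phi : R -> R) (a t : R) : (forall s, continuous phi s) ->
  is_derive (fun t => RInt phi a t) t (phi t).
Proof.
  intros Hphi. apply (is_derive_RInt phi _ a t); [|apply Hphi].
  exists (mkposreal 1 Rlt_0_1). intros u _.
  apply (RInt_correct (V := R_CompleteNormedModule)).
  apply (ex_RInt_continuous (V := R_CompleteNormedModule)).
  intros; apply Hphi.
Qed.

Lemma abs_RInt_le_const_continuous (phi : R -> R) (a t K : R) : (forall s, continuous phi s) ->
  (forall s, Rmin a t <= s <= Rmax a t -> Rabs (phi s) <= K) ->
  Rabs (RInt phi a t) <= Rabs (t - a) * K.
Proof.
  intros Hphi HK. apply (norm_RInt_le_const_abs (V := R_NormedModule) phi a t _ K HK).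
  apply (RInt_correct (V := R_CompleteNormedModule)).
  apply (ex_RInt_continuous (V := R_CompleteNormedModule)).
  intros; apply Hphi.
Qed.

Lemma ode_unique (y z Fy Fz : R -> R) (a b L : R) : 0 <= L ->
  (forall t, a <= t <= b -> continuous y t) -> (forall t, a <= t <= b -> continuous z t) ->
  (forall t, a < t < b -> is_derive y t (Fy t)) -> (forall t, a < t < b -> is_derive z t (Fz t)) ->
  (forall t, a <= t <= b -> Rabs (Fy t - Fz t) <= L * Rabs (y t - z t)) ->
  y a = z a -> forall t, a <= t <= b -> y t = z t.
Proof.
  intros HL Cy Cz Dy Dz Lip H0 t Ht.
  (* Gronwall: the weighted energy [exp (-2 L s) (y s - z s)^2] is nonincreasing. *)
  set (d := fun s => y s - z s).
  set (phi := fun s => exp (-2 * L * s) * (d s * d s)).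
  set (dphi := fun s => exp (-2 * L * s) * (-2 * L * (d s * d s) + 2 * d s * (Fy s - Fz s))).
  destruct (Req_dec t a) as [->|Hne]; [exact H0|].
  destruct (MVT_gen phi a t dphi) as [c [Hc Hmvt]].
  - intros s Hs. rewrite Rmin_left, Rmax_right in Hs by lra.
    assert (Dd : is_derive d s (Fy s - Fz s)).
    { apply (is_derive_minus (V := R_NormedModule)); [apply Dy | apply Dz]; lra. }
    unfold phi, dphi. auto_derive.
    + repeat split; exists (Fy s - Fz s); exact Dd.
    + replace (Derive (fun x => d x) s) with (Fy s - Fz s)
        by (symmetry; now apply is_derive_unique).
      ring.
  - intros s Hs. rewrite Rmin_left, Rmax_right in Hs by lra.
    apply continuity_pt_filterlim. unfold phi.
    assert (Cd : continuous d s).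
    { apply (continuous_minus (V := R_NormedModule)); [apply Cy | apply Cz]; lra. }
    apply (continuous_mult (K := R_AbsRing) (fun s => exp (-2 * L * s)) (fun s => d s * d s)).
    + apply (ex_derive_continuous (fun s => exp (-2 * L * s))). auto_derive. exact I.
    + apply (continuous_mult (K := R_AbsRing)); exact Cd.
  - rewrite Rmin_left, Rmax_right in Hc by lra.
    assert (Hdc : dphi c <= 0).
    { assert (Hcross : d c * (Fy c - Fz c) <= L * (d c * d c)).
      { eapply Rle_trans; [apply Rle_abs|]. rewrite Rabs_mult.
        replace (d c * d c) with (Rabs (d c) * Rabs (d c))
          by (rewrite <- Rabs_mult; apply Rabs_right; apply Rle_ge, Rle_0_sqr).
        assert (Hl : Rabs (Fy c - Fz c) <= L * Rabs (d c)) by (apply Lip; lra).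
        pose proof (Rabs_pos (d c)). nra. }
      pose proof (exp_pos (-2 * L * c)). unfold dphi. nra. }
    assert (Hphi_t : phi t <= 0).
    { replace (phi a) with 0 in Hmvt by (unfold phi, d; rewrite H0; ring). nra. }
    pose proof (exp_pos (-2 * L * t)). unfold phi in Hphi_t.
    assert (d t * d t <= 0) by nra. assert (d t = 0) by nra. unfold d in *. lra.
Qed.

Lemma abel_field_lipschitz (p q y z M K : R) :
  Rabs p <= M -> Rabs q <= M -> Rabs y <= K -> Rabs z <= K ->
  Rabs ((p * y ^ 3 + q * y ^ 2) - (p * z ^ 3 + q * z ^ 2))
  <= M * (3 * (K * K) + 2 * K) * Rabs (y - z).
Proof.
  intros Hp Hq Hy Hz.
  replace ((p * y ^ 3 + q * y ^ 2) - (p * z ^ 3 + q * z ^ 2))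
    with ((y - z) * (p * (y * y + y * z + z * z) + q * (y + z))) by ring.
  rewrite Rabs_mult, Rmult_comm. apply Rmult_le_compat_r; [apply Rabs_pos|].
  pose proof (Rabs_pos y). pose proof (Rabs_pos z).
  pose proof (Rabs_pos p). pose proof (Rabs_pos q).
  assert (Hsq : Rabs (y * y + y * z + z * z) <= 3 * (K * K)).
  { eapply Rle_trans; [apply Rabs_triang|].
    eapply Rle_trans; [apply Rplus_le_compat_r, Rabs_triang|]. rewrite !Rabs_mult. nra. }
  assert (Hlin : Rabs (y + z) <= 2 * K) by (eapply Rle_trans; [apply Rabs_triang | lra]).
  eapply Rle_trans; [apply Rabs_triang|]. rewrite !Rabs_mult.
  pose proof (Rabs_pos (y * y + y * z + z * z)). pose proof (Rabs_pos (y + z)). nra.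
Qed.

(** * The weights [1/n^2] and convolution majorants *)

(* With Stdlib's convention [/ 0 = 0], [inv_sq 0 = 0]. *)
Definition inv_sq (n : nat) : R := / (INR n ^ 2).

Lemma inv_sq_0 : inv_sq 0 = 0.
Proof. unfold inv_sq. simpl. rewrite Rmult_0_l. apply Rinv_0. Qed.

Lemma inv_sq_S (n : nat) : inv_sq (S n) = / (INR (S n) * INR (S n)).
Proof. unfold inv_sq. f_equal. ring. Qed.

Lemma inv_sq_nonneg (n : nat) : 0 <= inv_sq n.
Proof. unfold inv_sq. destruct n; [simpl; rewrite Rmult_0_l, Rinv_0; lra|].
  left. apply Rinv_0_lt_compat, pow_lt, lt_0_INR. lia. Qed.

Lemma inv_sq_le_1 (n : nat) : inv_sq n <= 1.
Proof.
  destruct n; [rewrite inv_sq_0; lra|]. rewrite inv_sq_S, <- Rinv_1.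
  assert (1 <= INR (S n)) by (apply (le_INR 1); lia).
  apply Rinv_le_contravar; nra.
Qed.

Lemma sum_inv_sq_le_2 (n : nat) : sum_f_R0 inv_sq n <= 2.
Proof.
  assert (Htel : forall m, sum_f_R0 inv_sq (S m) <= 2 - / INR (S m)).
  { induction m as [|m IH].
    - simpl. rewrite inv_sq_0, inv_sq_S. simpl. rewrite Rmult_1_l, Rinv_1. lra.
    - rewrite tech5, inv_sq_S, (S_INR (S m)).
      assert (Hm : 0 < INR (S m)) by (apply lt_0_INR; lia).
      assert (/ ((INR (S m) + 1) * (INR (S m) + 1)) <= / INR (S m) - / (INR (S m) + 1)).
      { replace (/ INR (S m) - / (INR (S m) + 1)) with (/ (INR (S m) * (INR (S m) + 1)))
          by (field; lra).
        apply Rinv_le_contravar; nra. }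
      lra. }
  destruct n; [simpl; rewrite inv_sq_0; lra|].
  pose proof (Htel n). assert (0 < / INR (S n)) by (apply Rinv_0_lt_compat, lt_0_INR; lia). lra.
Qed.

Lemma inv_sq_mul_le (n k : nat) : (k <= n)%nat ->
  inv_sq k * inv_sq (n - k) <= 2 * inv_sq n * (inv_sq k + inv_sq (n - k)).
Proof.
  intros Hk.
  pose proof (inv_sq_nonneg n). pose proof (inv_sq_nonneg k). pose proof (inv_sq_nonneg (n - k)).
  destruct (Nat.eq_dec k 0) as [->|Hk0]; [rewrite inv_sq_0; nra|].
  destruct (Nat.eq_dec k n) as [->|Hkn]; [rewrite Nat.sub_diag, inv_sq_0; nra|].
  assert (Hn : INR n = INR k + INR (n - k)) by (rewrite <- plus_INR; f_equal; lia).
  unfold inv_sq. rewrite Hn.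
  assert (Ha : 0 < INR k) by (apply lt_0_INR; lia).
  assert (Hb : 0 < INR (n - k)) by (apply lt_0_INR; lia).
  set (a := INR k) in *. set (b := INR (n - k)) in *.
  (* [(a + b)^2 <= 2 (a^2 + b^2)] after clearing denominators *)
  replace (/ (a ^ 2) * / (b ^ 2)) with ((a + b) ^ 2 / (a ^ 2 * b ^ 2 * (a + b) ^ 2))
    by (field; repeat split; lra).
  replace (2 * / ((a + b) ^ 2) * (/ (a ^ 2) + / (b ^ 2)))
    with (2 * (a ^ 2 + b ^ 2) / (a ^ 2 * b ^ 2 * (a + b) ^ 2)) by (field; repeat split; lra).
  apply Rmult_le_compat_r.
  - left. apply Rinv_0_lt_compat.
    apply Rmult_lt_0_compat; [apply Rmult_lt_0_compat|]; apply pow_lt; lra.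
  - pose proof (Rle_0_sqr (a - b)). unfold Rsqr in *. nra.
Qed.

Lemma sum_f_R0_rev (u : nat -> R) (n : nat) :
  sum_f_R0 (fun k => u (n - k)%nat) n = sum_f_R0 u n.
Proof.
  revert u. induction n as [|n IH]; intros u; [reflexivity|].
  rewrite decomp_sum by lia. simpl pred. rewrite tech5, Nat.sub_0_r.
  rewrite (sum_eq _ (fun k => u (n - k)%nat)) by (intros; f_equal; lia).
  rewrite IH. ring.
Qed.

Lemma PS_mult_inv_sq_le (n : nat) : PS_mult inv_sq inv_sq n <= 8 * inv_sq n.
Proof.
  destruct n as [|n]; [unfold PS_mult; simpl; rewrite inv_sq_0; lra|].
  unfold PS_mult.
  apply Rle_trans with (sum_f_R0 (fun k => 2 * inv_sq (S n) * (inv_sq k + inv_sq (S n - k))) (S n)).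
  - apply sum_Rle. intros k Hk. apply inv_sq_mul_le. exact Hk.
  - rewrite (sum_eq _ (fun k => (inv_sq k + inv_sq (S n - k)) * (2 * inv_sq (S n))))
      by (intros; ring).
    rewrite <- scal_sum, plus_sum, sum_f_R0_rev.
    pose proof (sum_inv_sq_le_2 (S n)). pose proof (inv_sq_nonneg (S n)). nra.
Qed.

Definition majorant (A B : R) (n : nat) : R := A * B ^ n * inv_sq n.

Lemma majorant_nonneg (A B : R) (n : nat) : 0 <= A -> 0 <= B -> 0 <= majorant A B n.
Proof.
  intros. unfold majorant.
  apply Rmult_le_pos; [apply Rmult_le_pos; [|apply pow_le]|apply inv_sq_nonneg]; assumption.
Qed.

Lemma majorant_le (A B : R) (n : nat) : 0 <= A -> 0 <= B -> majorant A B n <= A * B ^ n.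
Proof.
  intros HA HB. unfold majorant. pose proof (inv_sq_le_1 n). pose proof (inv_sq_nonneg n).
  assert (0 <= A * B ^ n) by (apply Rmult_le_pos; [|apply pow_le]; assumption). nra.
Qed.

Lemma PS_mult_majorant_le (A A' B : R) (n : nat) : 0 <= A -> 0 <= A' -> 0 <= B ->
  PS_mult (majorant A B) (majorant A' B) n <= majorant (8 * A * A') B n.
Proof.
  intros HA HA' HB. unfold PS_mult, majorant.
  rewrite (sum_eq _ (fun k => inv_sq k * inv_sq (n - k) * (A * A' * B ^ n))).
  - rewrite <- scal_sum. pose proof (PS_mult_inv_sq_le n) as Hconv. unfold PS_mult in Hconv.
    assert (0 <= A * A' * B ^ n) by (apply Rmult_le_pos; [nra | apply pow_le; lra]). nra.
  - intros k Hk. replace (B ^ n) with (B ^ k * B ^ (n - k)) by (rewrite <- pow_add; f_equal; lia).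
    ring.
Qed.

(** * The series solution of the Abel equation *)

Section AbelCoefficients.

Variables f g : R -> R.

(* The [n]-th coefficient in [rho] of [f x^3 + g x^2] for [x = sum_i p i * rho^i]. *)
Definition abel_rhs (p : nat -> R -> R) (n : nat) (s : R) : R :=
  f s * PS_mult (fun i => p i s) (PS_mult (fun i => p i s) (fun i => p i s)) n
  + g s * PS_mult (fun i => p i s) (fun i => p i s) n.

(* [abel_coef_upto n] tabulates [abel_coef 0], ..., [abel_coef n] and vanishes beyond [n].
   Since [abel_coef 0 = 0], [abel_rhs p (S n)] only depends on [p 1], ..., [p n]. *)
Fixpoint abel_coef_upto (n : nat) : nat -> R -> R :=
  match n with
  | O => fun _ _ => 0
  | S m => fun k t =>
      if (k =? S m)%nat
      then (if (m =? 0)%nat then 1 else 0) + RInt (abel_rhs (abel_coef_upto m) (S m)) (-1) t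
      else abel_coef_upto m k t
  end.

Definition abel_coef (n : nat) (t : R) : R := abel_coef_upto n n t.

Lemma abel_coef_upto_gt (n k : nat) (t : R) : (n < k)%nat -> abel_coef_upto n k t = 0.
Proof.
  induction n as [|n IH]; intros Hk; simpl; [reflexivity|].
  replace (k =? S n)%nat with false by (symmetry; apply Nat.eqb_neq; lia). apply IH. lia.
Qed.

Lemma abel_coef_upto_le (n k : nat) (t : R) : (k <= n)%nat -> abel_coef_upto n k t = abel_coef k t.
Proof.
  induction n as [|n IH]; intros Hk.
  - replace k with 0%nat by lia. reflexivity.
  - destruct (Nat.eq_dec k (S n)) as [->|Hne]; [reflexivity|].
    simpl. replace (k =? S n)%nat with false by (symmetry; apply Nat.eqb_neq; lia).
    apply IH. lia.
Qed.

Lemma abel_coef_0 (t : R) : abel_coef 0 t = 0.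
Proof. reflexivity. Qed.

Lemma abel_rhs_ext_lt (p q : nat -> R -> R) (n : nat) (s : R) :
  p 0%nat s = 0 -> q 0%nat s = 0 -> (forall i, (1 <= i < n)%nat -> p i s = q i s) ->
  abel_rhs p n s = abel_rhs q n s.
Proof.
  intros Hp0 Hq0 Hpq. unfold abel_rhs.
  assert (Hsq : forall j, (j <= n)%nat ->
            PS_mult (fun i => p i s) (fun i => p i s) j
            = PS_mult (fun i => q i s) (fun i => q i s) j).
  { intros j Hj. apply PS_mult_ext_lt; auto; intros i Hi; apply Hpq; lia. }
  assert (Hsq0 : forall r : nat -> R -> R, r 0%nat s = 0 ->
            PS_mult (fun i => r i s) (fun i => r i s) 0 = 0).
  { intros r Hr. unfold PS_mult. simpl. rewrite Hr. ring. }
  rewrite Hsq by lia. f_equal. f_equal.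
  apply PS_mult_ext_lt; [exact Hp0 | exact Hq0 | apply Hsq0, Hp0 | apply Hsq0, Hq0 | |];
    intros i Hi; [apply Hpq | apply Hsq]; lia.
Qed.

Lemma abel_rhs_coef_upto (n : nat) (s : R) :
  abel_rhs (abel_coef_upto n) (S n) s = abel_rhs abel_coef (S n) s.
Proof.
  apply abel_rhs_ext_lt;
    [rewrite abel_coef_upto_le by lia | | intros i Hi; apply abel_coef_upto_le; lia];
    reflexivity.
Qed.

Lemma abel_coef_S (n : nat) (t : R) :
  abel_coef (S n) t = (if (n =? 0)%nat then 1 else 0) + RInt (abel_rhs abel_coef (S n)) (-1) t.
Proof.
  unfold abel_coef at 1. simpl. rewrite Nat.eqb_refl. f_equal.
  apply RInt_ext. intros s _. apply abel_rhs_coef_upto.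
Qed.

Lemma abel_coef_1 (t : R) : abel_coef 1 t = 1.
Proof.
  rewrite abel_coef_S. simpl. rewrite (RInt_ext _ (fun _ => 0)), RInt_const.
  - unfold scal; simpl; unfold mult; simpl. ring.
  - intros s _. unfold abel_rhs, PS_mult. simpl. rewrite abel_coef_0. ring.
Qed.

Lemma abel_coef_init (n : nat) : abel_coef n (-1) = if (n =? 1)%nat then 1 else 0.
Proof.
  destruct n as [|n]; [reflexivity|].
  rewrite abel_coef_S, RInt_point. unfold zero; simpl. destruct n; simpl; ring.
Qed.

Hypothesis f_cont : forall s, continuous f s.
Hypothesis g_cont : forall s, continuous g s.

Lemma continuous_abel_rhs (p : nat -> R -> R) (n : nat) (x : R) :
  (forall k, (k <= n)%nat -> continuous (p k) x) -> continuous (abel_rhs p n) x.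
Proof.
  intros Hp. unfold abel_rhs.
  apply (continuous_plus (V := R_NormedModule)); apply (continuous_mult (K := R_AbsRing)); auto.
  - apply (continuous_PS_mult p (fun j y => PS_mult (fun i => p i y) (fun i => p i y) j)); auto.
    intros k Hk. apply continuous_PS_mult; intros; apply Hp; lia.
  - apply continuous_PS_mult; exact Hp.
Qed.

Lemma abel_coef_is_derive (n : nat) (t : R) : is_derive (abel_coef n) t (abel_rhs abel_coef n t).
Proof.
  revert t. induction n as [n IH] using lt_wf_ind. intros t.
  destruct n as [|m].
  - replace (abel_rhs abel_coef 0 t) with 0
      by (unfold abel_rhs, PS_mult; simpl; rewrite abel_coef_0; ring).
    apply (is_derive_const (V := R_NormedModule)).
  - assert (Hcont : forall s, continuous (abel_rhs abel_coef (S m)) s).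
    { intros s. apply (continuous_ext (abel_rhs (abel_coef_upto m) (S m))).
      { intros y. apply abel_rhs_coef_upto. }
      apply continuous_abel_rhs. intros k Hk.
      destruct (Nat.eq_dec k (S m)) as [->|Hne].
      - apply (continuous_ext (fun _ => 0)); [intros y; symmetry; apply abel_coef_upto_gt; lia|].
        apply continuous_const.
      - apply (continuous_ext (abel_coef k)); [intros y; symmetry; apply abel_coef_upto_le; lia|].
        apply (ex_derive_continuous (V := R_NormedModule)). eexists. apply IH. lia. }
    apply (is_derive_ext
             (fun t => (if (m =? 0)%nat then 1 else 0) + RInt (abel_rhs abel_coef (S m)) (-1) t)).
    { intros y. symmetry. apply abel_coef_S. }
    rewrite <- (Rplus_0_l (abel_rhs abel_coef (S m) t)).
    apply (is_derive_plus (V := R_NormedModule)).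
    + apply (is_derive_const (V := R_NormedModule)).
    + apply is_derive_RInt_continuous. exact Hcont.
Qed.

Lemma continuous_abel_coef (n : nat) (t : R) : continuous (abel_coef n) t.
Proof. apply (ex_derive_continuous (V := R_NormedModule)). eexists. apply abel_coef_is_derive. Qed.

Lemma continuous_abel_rhs_coef (n : nat) (t : R) : continuous (abel_rhs abel_coef n) t.
Proof. apply continuous_abel_rhs. intros; apply continuous_abel_coef. Qed.

Lemma abel_coef_2 (t : R) : abel_coef 2 t = RInt g (-1) t.
Proof.
  rewrite abel_coef_S, Rplus_0_l. apply RInt_ext. intros s _.
  unfold abel_rhs, PS_mult. simpl. rewrite abel_coef_0, abel_coef_1. ring.
Qed.

Lemma abel_coef_3 (t : R) : abel_coef 3 t = RInt f (-1) t + abel_coef 2 t ^ 2.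
Proof.
  rewrite abel_coef_S, Rplus_0_l.
  rewrite (RInt_ext _ (fun s => f s + 2 * g s * abel_coef 2 s))
    by (intros s _; unfold abel_rhs, PS_mult; simpl; rewrite abel_coef_0, abel_coef_1; ring).
  assert (Hd2 : forall s, is_derive (abel_coef 2) s (g s)).
  { intros s. apply (is_derive_ext (fun t => RInt g (-1) t));
      [intros y; symmetry; apply abel_coef_2|].
    apply is_derive_RInt_continuous, g_cont. }
  assert (Hc : forall s, continuous (fun s => 2 * g s * abel_coef 2 s) s).
  { intros s. apply (continuous_mult (K := R_AbsRing)); [|apply continuous_abel_coef].
    apply (continuous_scal_r (V := R_NormedModule) 2 g), g_cont. }
  assert (Hsq : RInt (fun s => 2 * g s * abel_coef 2 s) (-1) t = abel_coef 2 t ^ 2).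
  { apply is_RInt_unique.
    replace (abel_coef 2 t ^ 2) with (minus (abel_coef 2 t ^ 2) (abel_coef 2 (-1) ^ 2))
      by (rewrite abel_coef_init; unfold minus, plus, opp; simpl; ring).
    apply (is_RInt_derive (V := R_CompleteNormedModule) (fun s => abel_coef 2 s ^ 2)).
    - intros s _. auto_derive; [exists (g s); apply Hd2|].
      replace (Derive (fun x => abel_coef 2 x) s) with (g s)
        by (symmetry; apply is_derive_unique, Hd2).
      ring.
    - intros s _. apply Hc. }
  rewrite <- Hsq. apply (RInt_plus (V := R_CompleteNormedModule));
    apply (ex_RInt_continuous (V := R_CompleteNormedModule)); intros; auto.
Qed.

Variable M : R.
Hypothesis f_bound : forall s, Rabs (f s) <= M.
Hypothesis g_bound : forall s, Rabs (g s) <= M.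

Let M_nonneg : 0 <= M.
Proof. eapply Rle_trans; [apply Rabs_pos | apply (f_bound 0)]. Qed.

Let B := 216 * M + 1.
Let A := / B.

Let B_pos : 0 < B.
Proof. unfold B. lra. Qed.

Let A_pos : 0 < A.
Proof. apply Rinv_0_lt_compat, B_pos. Qed.

Let AB_1 : A * B = 1.
Proof. apply Rinv_l. pose proof B_pos. lra. Qed.

(* [3] bounds the length of [[-1, t]] for [|t| <= 2]; [64 A^3] and [8 A^2] are the majorants of the
   cubic and quadratic convolutions (cf. [PS_mult_majorant_le]). *)
Let A_large : 3 * (M * (64 * A ^ 3 + 8 * A ^ 2)) <= A.
Proof.
  assert (HA1 : A <= 1) by (unfold A, B; rewrite <- Rinv_1; apply Rinv_le_contravar; lra).
  assert (HMA : 216 * M * A <= 1) by (replace 1 with (A * B) by exact AB_1; unfold B; nra).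
  pose proof A_pos. nra.
Qed.

Let ratio_lt_1 (rho : R) : Rabs rho < / B -> 0 <= B * Rabs rho < 1.
Proof.
  intros Hrho. split; [apply Rmult_le_pos; [lra | apply Rabs_pos]|].
  apply (Rmult_lt_compat_l B) in Hrho; [|exact B_pos]. rewrite Rinv_r in Hrho; lra.
Qed.

Lemma abel_rhs_majorant (p : nat -> R -> R) (n : nat) (s : R) :
  (forall k, (k <= n)%nat -> Rabs (p k s) <= majorant A B k) ->
  Rabs (abel_rhs p n s) <= M * majorant (64 * A ^ 3 + 8 * A ^ 2) B n.
Proof.
  intros Hp.
  assert (Hsq : forall j, (j <= n)%nat ->
            Rabs (PS_mult (fun i => p i s) (fun i => p i s) j) <= majorant (8 * A * A) B j).
  { intros j Hj. eapply Rle_trans; [apply PS_mult_Rabs_le; intros; apply Hp; lia|].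
    apply PS_mult_majorant_le; lra. }
  assert (Hcube : Rabs (PS_mult (fun i => p i s) (PS_mult (fun i => p i s) (fun i => p i s)) n)
                  <= majorant (8 * A * (8 * A * A)) B n).
  { eapply Rle_trans; [apply PS_mult_Rabs_le; [intros; apply Hp | intros; apply Hsq]; lia|].
    apply PS_mult_majorant_le; nra. }
  unfold abel_rhs. eapply Rle_trans; [apply Rabs_triang|]. rewrite !Rabs_mult.
  replace (M * majorant (64 * A ^ 3 + 8 * A ^ 2) B n)
    with (M * majorant (8 * A * (8 * A * A)) B n + M * majorant (8 * A * A) B n)
    by (unfold majorant; ring).
  apply Rplus_le_compat; apply Rmult_le_compat; auto using Rabs_pos.
Qed.

Lemma abel_coef_majorant (n : nat) (t : R) : Rabs t <= 2 -> Rabs (abel_coef n t) <= majorant A B n.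
Proof.
  revert t. induction n as [n IH] using lt_wf_ind. intros t Ht.
  destruct n as [|[|m]].
  - rewrite abel_coef_0, Rabs_R0. apply majorant_nonneg; lra.
  - rewrite abel_coef_1, Rabs_R1. unfold majorant. rewrite inv_sq_S. simpl. field_simplify; lra.
  - rewrite abel_coef_S, Rplus_0_l, <- (RInt_ext (abel_rhs (abel_coef_upto (S m)) (S (S m))))
      by (intros; apply abel_rhs_coef_upto).
    set (C := 64 * A ^ 3 + 8 * A ^ 2).
    eapply Rle_trans; [apply (abs_RInt_le_const_continuous _ _ _ (M * majorant C B (S (S m))))|].
    + intros s. apply (continuous_ext (abel_rhs abel_coef (S (S m))));
        [intros; symmetry; apply abel_rhs_coef_upto | apply continuous_abel_rhs_coef].
    + intros s Hs. apply abel_rhs_majorant. intros k Hk.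
      destruct (Nat.eq_dec k (S (S m))) as [->|Hne].
      * rewrite abel_coef_upto_gt, Rabs_R0 by lia. apply majorant_nonneg; lra.
      * rewrite abel_coef_upto_le by lia. apply IH; [lia|].
        apply (Rabs_le_between_neg1 t); assumption.
    + assert (Rabs (t - -1) <= 3) by (unfold Rabs in *; repeat destruct Rcase_abs; lra).
      assert (0 <= B ^ S (S m) * inv_sq (S (S m)))
        by (apply Rmult_le_pos; [apply pow_le; lra | apply inv_sq_nonneg]).
      assert (0 <= C) by (unfold C; nra).
      unfold majorant. rewrite !Rmult_assoc.
      apply Rle_trans with (3 * (M * (C * (B ^ S (S m) * inv_sq (S (S m)))))).
      * apply Rmult_le_compat_r; [|assumption]. apply Rmult_le_pos; [lra | nra].
      * fold C in A_large. nra.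
Qed.

Lemma abel_coef_bound (n : nat) (t : R) : Rabs t <= 2 -> Rabs (abel_coef n t) <= A * B ^ n.
Proof.
  intros Ht. eapply Rle_trans; [apply abel_coef_majorant, Ht | apply majorant_le; lra].
Qed.

Lemma abel_rhs_coef_bound (n : nat) (t : R) :
  Rabs t <= 2 -> Rabs (abel_rhs abel_coef n t) <= A * B ^ n.
Proof.
  intros Ht. eapply Rle_trans; [apply abel_rhs_majorant; intros; apply abel_coef_majorant, Ht|].
  assert (HC : 0 <= 64 * A ^ 3 + 8 * A ^ 2) by nra.
  pose proof (majorant_le _ B n HC ltac:(lra)).
  pose proof (majorant_nonneg _ B n HC ltac:(lra)).
  assert (0 <= B ^ n) by (apply pow_le; lra).
  apply Rle_trans with (M * ((64 * A ^ 3 + 8 * A ^ 2) * B ^ n)); nra.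
Qed.

Lemma abel_coef_sq_bound (n : nat) (t : R) : Rabs t <= 2 ->
  Rabs (PS_mult (fun i => abel_coef i t) (fun i => abel_coef i t) n) <= 8 * A * A * B ^ n.
Proof.
  intros Ht. eapply Rle_trans; [apply PS_mult_Rabs_le; intros; apply abel_coef_majorant, Ht|].
  eapply Rle_trans; [apply PS_mult_majorant_le; lra | apply majorant_le; [nra | lra]].
Qed.

Lemma CV_radius_abel_coef_gt (t rho : R) : Rabs t <= 2 -> Rabs rho < / B ->
  Rbar_lt (Rabs rho) (CV_radius (fun n => abel_coef n t)).
Proof.
  intros Ht Hrho. apply (CV_radius_gt_of_geom_bound _ A B); auto.
  intros n. apply abel_coef_bound, Ht.
Qed.

Definition abel_series (rho t : R) : R := PSeries (fun n => abel_coef n t) rho.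

Lemma is_pseries_abel_rhs (rho t : R) : Rabs t <= 2 -> Rabs rho < / B ->
  is_pseries (fun n => abel_rhs abel_coef n t) rho
    (f t * abel_series rho t ^ 3 + g t * abel_series rho t ^ 2).
Proof.
  intros Ht Hrho. set (a := fun i => abel_coef i t). set (X := abel_series rho t).
  assert (Ha : Rbar_lt (Rabs rho) (CV_radius a)) by (apply CV_radius_abel_coef_gt; assumption).
  assert (Haa : Rbar_lt (Rabs rho) (CV_radius (PS_mult a a))).
  { apply (CV_radius_gt_of_geom_bound _ (8 * A * A) B); auto.
    intros n. apply abel_coef_sq_bound, Ht. }
  assert (HX : is_pseries a rho X) by (apply PSeries_correct, CV_radius_inside, Ha).
  assert (HX2 : is_pseries (PS_mult a a) rho (X * X)) by (apply is_pseries_mult; assumption).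
  assert (HX3 : is_pseries (PS_mult a (PS_mult a a)) rho (X * (X * X)))
    by (apply is_pseries_mult; assumption).
  replace (f t * X ^ 3 + g t * X ^ 2) with (plus (scal (f t) (X * (X * X))) (scal (g t) (X * X)))
    by (unfold plus, scal; simpl; unfold mult; simpl; ring).
  apply (is_pseries_plus (V := R_NormedModule) (PS_scal (f t) _) (PS_scal (g t) _));
    apply (is_pseries_scal (V := R_NormedModule)); auto; unfold mult; simpl; ring.
Qed.

Lemma abel_series_is_derive (rho t : R) : Rabs rho < / B -> Rabs t < 2 ->
  is_derive (abel_series rho) t (f t * abel_series rho t ^ 3 + g t * abel_series rho t ^ 2).
Proof.
  intros Hrho Ht.
  rewrite <- (is_pseries_unique _ _ _ (is_pseries_abel_rhs rho t ltac:(lra) Hrho)).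
  unfold abel_series, PSeries.
  apply (is_derive_Series_dominated (fun n y => abel_coef n y * rho ^ n)
           (fun n y => abel_rhs abel_coef n y * rho ^ n) A (B * Rabs rho) 2);
    [exact (ratio_lt_1 rho Hrho) | | | | exact Ht].
  - intros n y _. rewrite (Rmult_comm _ (rho ^ n)).
    apply (is_derive_ext (fun y => rho ^ n * abel_coef n y)); [intros; apply Rmult_comm|].
    apply is_derive_scal, abel_coef_is_derive.
  - intros n y Hy. apply Rabs_mult_pow_le_geom, abel_coef_bound. lra.
  - intros n y Hy. apply Rabs_mult_pow_le_geom, abel_rhs_coef_bound. lra.
Qed.

Lemma abel_series_init (rho : R) : abel_series rho (-1) = rho.
Proof.
  assert (H1 := is_pseries_single 1 1 rho). rewrite Rmult_1_l, pow_1 in H1.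
  apply is_pseries_unique. eapply is_pseries_ext; [|exact H1].
  intros n. symmetry. apply abel_coef_init.
Qed.

Definition f_coef_integral (n : nat) (t : R) : R := RInt (fun s => f s * abel_coef n s) (-1) t.

Lemma continuous_f_coef (n : nat) (s : R) : continuous (fun s => f s * abel_coef n s) s.
Proof. apply (continuous_mult (K := R_AbsRing)); [apply f_cont | apply continuous_abel_coef]. Qed.

Lemma f_coef_integral_bound (n : nat) (t : R) : Rabs t <= 2 ->
  Rabs (f_coef_integral n t) <= 3 * M * A * B ^ n.
Proof.
  intros Ht. unfold f_coef_integral.
  eapply Rle_trans;
    [apply (abs_RInt_le_const_continuous _ _ _ (M * (A * B ^ n))); [apply continuous_f_coef|]|].
  - intros s Hs. rewrite Rabs_mult. apply Rmult_le_compat; try apply Rabs_pos; [apply f_bound|].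
    apply abel_coef_bound, (Rabs_le_between_neg1 t); assumption.
  - assert (Rabs (t - -1) <= 3) by (unfold Rabs in *; repeat destruct Rcase_abs; lra).
    assert (0 <= A * B ^ n) by (apply Rmult_le_pos; [lra | apply pow_le; lra]).
    assert (0 <= M * (A * B ^ n)) by (apply Rmult_le_pos; lra).
    nra.
Qed.

Lemma f_coef_series_is_derive (rho t : R) : Rabs rho < / B -> Rabs t < 2 ->
  is_derive (fun t => PSeries (fun n => f_coef_integral n t) rho) t (f t * abel_series rho t).
Proof.
  intros Hrho Ht. unfold abel_series, PSeries. rewrite <- Series_scal_l.
  rewrite (Series_ext _ (fun n => f t * abel_coef n t * rho ^ n)) by (intros; ring).
  apply (is_derive_Series_dominated (fun n y => f_coef_integral n y * rho ^ n)
           (fun n y => f y * abel_coef n y * rho ^ n) (3 * M * A) (B * Rabs rho) 2);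
    [exact (ratio_lt_1 rho Hrho) | | | | exact Ht].
  - intros n y _. rewrite (Rmult_comm _ (rho ^ n)).
    apply (is_derive_ext (fun y => rho ^ n * f_coef_integral n y)); [intros; apply Rmult_comm|].
    apply is_derive_scal, (is_derive_RInt_continuous (fun s => f s * abel_coef n s)).
    apply continuous_f_coef.
  - intros n y Hy. apply Rabs_mult_pow_le_geom, f_coef_integral_bound. lra.
  - intros n y Hy. apply Rabs_mult_pow_le_geom. rewrite Rabs_mult.
    assert (Rabs (abel_coef n y) <= A * B ^ n) by (apply abel_coef_bound; lra).
    assert (0 <= A * B ^ n) by (apply Rmult_le_pos; [lra | apply pow_le; lra]).
    pose proof (f_bound y). pose proof (Rabs_pos (f y)). pose proof (Rabs_pos (abel_coef n y)).
    nra.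
Qed.

Lemma is_RInt_f_abel_series (rho : R) : Rabs rho < / B ->
  is_RInt (fun s => f s * abel_series rho s) (-1) 1 (PSeries (fun n => f_coef_integral n 1) rho).
Proof.
  intros Hrho. set (Y := fun t => PSeries (fun n => f_coef_integral n t) rho).
  change (is_RInt (fun s => f s * abel_series rho s) (-1) 1 (Y 1)).
  replace (Y 1) with (minus (Y 1) (Y (-1))).
  - apply (is_RInt_derive (V := R_CompleteNormedModule) Y).
    + intros s Hs. rewrite Rmin_left, Rmax_right in Hs by lra.
      apply f_coef_series_is_derive; [exact Hrho | apply Rabs_def1; lra].
    + intros s Hs. rewrite Rmin_left, Rmax_right in Hs by lra.
      apply (continuous_mult (K := R_AbsRing)); [apply f_cont|].
      apply (ex_derive_continuous (V := R_NormedModule)). eexists.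
      apply abel_series_is_derive; [exact Hrho | apply Rabs_def1; lra].
  - replace (Y (-1)) with 0; [unfold minus, plus, opp; simpl; ring|].
    unfold Y, f_coef_integral.
    rewrite (PSeries_ext _ (fun _ => 0)) by (intros; rewrite RInt_point; reflexivity).
    symmetry. apply PSeries_const_0.
Qed.

Definition Hfun_coef (n : nat) : R :=
  f_coef_integral n 1 + (if (n =? 0)%nat then RInt g (-1) 1 else 0).

Lemma RInt_abel_series (rho : R) : Rabs rho < / B ->
  RInt (fun s => f s * abel_series rho s + g s) (-1) 1 = PSeries Hfun_coef rho.
Proof.
  intros Hrho. assert (Hfx := is_RInt_f_abel_series rho Hrho).
  rewrite (RInt_plus (V := R_CompleteNormedModule)); [| eexists; exact Hfx |].
  - rewrite (is_RInt_unique _ _ _ _ Hfx). symmetry. apply is_pseries_unique.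
    apply (is_pseries_plus (V := R_NormedModule) (fun n => f_coef_integral n 1)).
    + apply PSeries_correct, CV_radius_inside.
      apply (CV_radius_gt_of_geom_bound _ (3 * M * A) B); auto.
      intros n. apply f_coef_integral_bound. rewrite Rabs_R1. lra.
    + assert (H0 := is_pseries_single 0 (RInt g (-1) 1) rho).
      rewrite pow_O, Rmult_1_r in H0. exact H0.
  - apply (ex_RInt_continuous (V := R_CompleteNormedModule)). intros; apply g_cont.
Qed.

Lemma CV_radius_Hfun_coef_gt (rho : R) : Rabs rho < / B -> Rbar_lt (Rabs rho) (CV_radius Hfun_coef).
Proof.
  intros Hrho. apply (CV_radius_gt_of_geom_bound _ (3 * M * A + Rabs (RInt g (-1) 1)) B); auto.
  intros n. unfold Hfun_coef.
  assert (Hf1 := f_coef_integral_bound n 1 ltac:(rewrite Rabs_R1; lra)).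
  pose proof (Rabs_pos (RInt g (-1) 1)). assert (0 <= B ^ n) by (apply pow_le; lra).
  destruct n as [|n]; simpl in *.
  - eapply Rle_trans; [apply Rabs_triang|]. lra.
  - rewrite Rplus_0_r. eapply Rle_trans; [exact Hf1|]. nra.
Qed.

End AbelCoefficients.

(** * Solutions on [[-1, 1]] and the expansion of [H(1, rho)] *)

Lemma abel_solution_intro (f g y : R -> R) (rho : R) : y (-1) = rho ->
  (forall t, -1 <= t <= 1 -> is_derive y t (f t * y t ^ 3 + g t * y t ^ 2)) ->
  abel_solution f g y rho.
Proof.
  intros Hy0 Hy. split; [exact Hy0|]. split.
  - intros t Ht. apply (filterlim_filter_le_1 y (filter_le_within _)).
    apply (ex_derive_continuous (V := R_NormedModule)). eexists. apply Hy, Ht.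
  - intros t Ht. apply Hy. lra.
Qed.

Lemma abel_solution_unique (f g y z : R -> R) (rho : R) :
  (forall t, -1 <= t <= 1 -> continuous f t) -> (forall t, -1 <= t <= 1 -> continuous g t) ->
  abel_solution f g y rho -> abel_solution f g z rho ->
  forall t, -1 <= t <= 1 -> y t = z t.
Proof.
  intros Cf Cg [Hy0 [Cy Dy]] [Hz0 [Cz Dz]] t Ht.
  set (Y := fun s => y (clamp (-1) 1 s)). set (Z := fun s => z (clamp (-1) 1 s)).
  assert (CY : forall s, continuous Y s) by (intros; apply continuous_comp_clamp; [lra | exact Cy]).
  assert (CZ : forall s, continuous Z s) by (intros; apply continuous_comp_clamp; [lra | exact Cz]).
  assert (Hclamp : forall s, -1 <= s <= 1 -> Y s = y s /\ Z s = z s)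
    by (intros s Hs; unfold Y, Z; rewrite clamp_id by exact Hs; split; reflexivity).
  destruct (continuous_bounded_on f (-1) 1 ltac:(lra) Cf) as [Mf [_ HMf]].
  destruct (continuous_bounded_on g (-1) 1 ltac:(lra) Cg) as [Mg [_ HMg]].
  destruct (continuous_bounded_on Y (-1) 1 ltac:(lra) (fun s _ => CY s)) as [KY [HKY HY]].
  destruct (continuous_bounded_on Z (-1) 1 ltac:(lra) (fun s _ => CZ s)) as [KZ [HKZ HZ]].
  set (M := Rmax Mf Mg). set (K := Rmax KY KZ).
  assert (HM : 0 <= M).
  { eapply Rle_trans; [apply Rabs_pos | eapply Rle_trans; [apply (HMf 0); lra | apply Rmax_l]]. }
  assert (HK : 0 <= K) by (eapply Rle_trans; [exact HKY | apply Rmax_l]).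
  destruct (Hclamp t Ht) as [<- <-].
  apply (ode_unique Y Z (fun s => f s * Y s ^ 3 + g s * Y s ^ 2)
           (fun s => f s * Z s ^ 3 + g s * Z s ^ 2)
           (-1) 1 (M * (3 * (K * K) + 2 * K))); auto.
  - apply Rmult_le_pos; nra.
  - intros s Hs. destruct (Hclamp s ltac:(lra)) as [-> _].
    apply is_derive_comp_clamp; [exact Hs | apply Dy, Hs].
  - intros s Hs. destruct (Hclamp s ltac:(lra)) as [_ ->].
    apply is_derive_comp_clamp; [exact Hs | apply Dz, Hs].
  - intros s Hs. apply abel_field_lipschitz.
    + eapply Rle_trans; [apply HMf, Hs | apply Rmax_l].
    + eapply Rle_trans; [apply HMg, Hs | apply Rmax_r].
    + eapply Rle_trans; [apply HY, Hs | apply Rmax_l].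
    + eapply Rle_trans; [apply HZ, Hs | apply Rmax_r].
  - destruct (Hclamp (-1) ltac:(lra)) as [-> ->]. congruence.
Qed.

Definition extend_I (f : R -> R) (s : R) : R := f (clamp (-1) 1 s).

Lemma extend_I_eq (f : R -> R) (s : R) : -1 <= s <= 1 -> extend_I f s = f s.
Proof. intros Hs. unfold extend_I. rewrite clamp_id by exact Hs. reflexivity. Qed.

Lemma RInt_extend_I (f : R -> R) (t : R) : -1 <= t <= 1 -> RInt (extend_I f) (-1) t = prim f t.
Proof.
  intros Ht. apply RInt_ext. intros s Hs. rewrite Rmin_left, Rmax_right in Hs by lra.
  apply extend_I_eq. lra.
Qed.

Lemma continuous_extend_I (f : R -> R) (s : R) : analytic_on_I f -> continuous (extend_I f) s.
Proof.
  intros Hf. apply (continuous_comp (clamp (-1) 1) f); [apply continuous_clamp|].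
  apply analytic_at_continuous, Hf, clamp_in. lra.
Qed.

Lemma extend_I_bounded (f : R -> R) :
  analytic_on_I f -> exists M, forall s, Rabs (extend_I f s) <= M.
Proof.
  intros Hf.
  destruct (continuous_bounded_on (extend_I f) (-1) 1) as [M [_ HM]];
    [lra | intros; apply continuous_extend_I, Hf|].
  exists M. intros s. unfold extend_I at 1. rewrite <- (clamp_id (-1) 1 (clamp (-1) 1 s))
    by (apply clamp_in; lra).
  apply HM, clamp_in. lra.
Qed.

Section ExtendedCoefficients.

Variables f g : R -> R.
Hypothesis f_analytic : analytic_on_I f.
Hypothesis g_analytic : analytic_on_I g.

Let F := extend_I f.
Let G := extend_I g.

Let F_cont (s : R) : continuous F s.
Proof. apply continuous_extend_I, f_analytic. Qed.

Let G_cont (s : R) : continuous G s.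
Proof. apply continuous_extend_I, g_analytic. Qed.

Lemma abel_coef_extend_I_2 (t : R) : -1 <= t <= 1 -> abel_coef F G 2 t = prim g t.
Proof. intros Ht. rewrite abel_coef_2. apply RInt_extend_I, Ht. Qed.

Lemma Hfun_coef_extend_I (n : nat) :
  Hfun_coef F G (S n) = RInt (fun t => f t * abel_coef F G (S n) t) (-1) 1.
Proof.
  unfold Hfun_coef, f_coef_integral. simpl. rewrite Rplus_0_r.
  apply RInt_ext. intros t Ht. rewrite Rmin_left, Rmax_right in Ht by lra.
  unfold F. rewrite extend_I_eq by lra. reflexivity.
Qed.

Lemma Hfun_coef_extend_I_le_2 (j : nat) : (1 <= j <= 2)%nat ->
  Hfun_coef F G j = RInt (fun t => f t * prim g t ^ (j - 1)) (-1) 1.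
Proof.
  intros Hj. destruct j as [|j]; [lia|]. rewrite Hfun_coef_extend_I.
  apply RInt_ext. intros t Ht. rewrite Rmin_left, Rmax_right in Ht by lra. f_equal.
  destruct j as [|j]; [rewrite abel_coef_1; reflexivity|].
  replace j with 0%nat by lia. rewrite abel_coef_extend_I_2 by lra. simpl. ring.
Qed.

Lemma Hfun_coef_extend_I_3 :
  Hfun_coef F G 3
  = RInt (fun t => f t * prim g t ^ 2) (-1) 1 + RInt (fun t => f t * prim f t) (-1) 1.
Proof.
  unfold Hfun_coef, f_coef_integral. change (3 =? 0)%nat with false. rewrite Rplus_0_r.
  assert (Hcont : forall h : R -> R, (forall s, continuous h s) ->
            ex_RInt (fun s => F s * h s) (-1) 1).
  { intros h Hh. apply (ex_RInt_continuous (V := R_CompleteNormedModule)). intros s _.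
    apply (continuous_mult (K := R_AbsRing)); [apply F_cont | apply Hh]. }
  assert (H3 : forall s,
             F s * abel_coef F G 3 s = F s * abel_coef F G 2 s ^ 2 + F s * RInt F (-1) s)
    by (intros; rewrite abel_coef_3 by assumption; ring).
  rewrite (RInt_ext _ _ _ _ (fun s _ => H3 s)).
  rewrite (RInt_plus (V := R_CompleteNormedModule)).
  - unfold plus; simpl.
    f_equal; apply RInt_ext; intros t Ht; rewrite Rmin_left, Rmax_right in Ht by lra;
      unfold F; rewrite extend_I_eq by lra; f_equal.
    + fold G. rewrite abel_coef_extend_I_2 by lra. reflexivity.
    + apply RInt_extend_I. lra.
  - apply (Hcont (fun s => abel_coef F G 2 s ^ 2)). intros s.
    apply (continuous_mult (K := R_AbsRing)); [apply continuous_abel_coef; assumption|].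
    apply (continuous_mult (K := R_AbsRing));
      [apply continuous_abel_coef; assumption | apply continuous_const].
  - apply Hcont. intros s. apply (ex_derive_continuous (V := R_NormedModule)). eexists.
    apply is_derive_RInt_continuous, F_cont.
Qed.

Lemma abel_series_extend_I_solution (M rho : R) :
  (forall s, Rabs (F s) <= M) -> (forall s, Rabs (G s) <= M) -> Rabs rho < / (216 * M + 1) ->
  abel_solution f g (abel_series F G rho) rho.
Proof.
  intros HFM HGM Hrho. apply abel_solution_intro; [apply abel_series_init|]. intros s Hs.
  rewrite <- (extend_I_eq f s Hs), <- (extend_I_eq g s Hs).
  apply (abel_series_is_derive F G F_cont G_cont M HFM HGM); [exact Hrho|].
  apply Rabs_def1; lra.
Qed.

Lemma Hfun_locally_PSeries (x : R -> R -> R) (delta : R) : 0 < delta ->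
  (forall rho, Rabs rho < delta -> abel_solution f g (fun t => x t rho) rho) ->
  locally 0 (fun rho => PSeries (Hfun_coef F G) rho = Hfun f g x 1 rho)
  /\ Rbar_lt 0 (CV_radius (Hfun_coef F G)).
Proof.
  intros Hdelta Hsol.
  destruct (extend_I_bounded f f_analytic) as [Mf HMf].
  destruct (extend_I_bounded g g_analytic) as [Mg HMg].
  set (M := Rmax Mf Mg).
  assert (HFM : forall s, Rabs (F s) <= M)
    by (intros; eapply Rle_trans; [apply HMf | apply Rmax_l]).
  assert (HGM : forall s, Rabs (G s) <= M)
    by (intros; eapply Rle_trans; [apply HMg | apply Rmax_r]).
  assert (HB : 0 < / (216 * M + 1))
    by (pose proof (Rabs_pos (F 0)); pose proof (HFM 0); apply Rinv_0_lt_compat; lra).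
  split.
  - assert (Hr : 0 < Rmin delta (/ (216 * M + 1))) by (apply Rmin_pos; assumption).
    exists (mkposreal _ Hr). intros rho Hrho.
    change (Rabs (rho - 0) < Rmin delta (/ (216 * M + 1))) in Hrho. rewrite Rminus_0_r in Hrho.
    assert (Hrd : Rabs rho < delta) by (eapply Rlt_le_trans; [exact Hrho | apply Rmin_l]).
    assert (HrB : Rabs rho < / (216 * M + 1))
      by (eapply Rlt_le_trans; [exact Hrho | apply Rmin_r]).
    rewrite <- (RInt_abel_series F G F_cont G_cont M HFM HGM rho HrB).
    apply RInt_ext. intros t Ht. rewrite Rmin_left, Rmax_right in Ht by lra.
    unfold F, G. rewrite !extend_I_eq by lra. f_equal. f_equal.
    apply (abel_solution_unique f g (abel_series F G rho) (fun t => x t rho) rho); [| | | |lra].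
    + intros s Hs. apply analytic_at_continuous, f_analytic, Hs.
    + intros s Hs. apply analytic_at_continuous, g_analytic, Hs.
    + apply (abel_series_extend_I_solution M); assumption.
    + apply Hsol, Hrd.
  - rewrite <- Rabs_R0. apply (CV_radius_Hfun_coef_gt F G F_cont G_cont M HFM HGM).
    rewrite Rabs_R0. exact HB.
Qed.

End ExtendedCoefficients.

Theorem lemma2 (f g : R -> R) (x : R -> R -> R) (delta : R) :
  analytic_on_I f -> analytic_on_I g ->
  0 < delta ->
  (forall rho, Rabs rho < delta -> abel_solution f g (fun t => x t rho) rho) ->
  (forall j : nat, (1 <= j <= 3)%nat -> ex_derive_n (fun rho => Hfun f g x 1 rho) j 0) /\
  (forall j : nat, (1 <= j <= 2)%nat ->
     Derive_n (fun rho => Hfun f g x 1 rho) j 0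
     = INR (Factorial.fact j) * RInt (fun t => f t * (prim g t) ^ (j - 1)) (-1) 1) /\
  Derive_n (fun rho => Hfun f g x 1 rho) 3 0
  = INR (Factorial.fact 3) * RInt (fun t => f t * (prim g t) ^ 2) (-1) 1
    + INR (Factorial.fact 3) * RInt (fun t => f t * prim f t) (-1) 1.
Proof.
  intros Haf Hag Hdelta Hsol.
  destruct (Hfun_locally_PSeries f g Haf Hag x delta Hdelta Hsol) as [Hloc Hrad].
  assert (HD : forall j, Derive_n (fun rho => Hfun f g x 1 rho) j 0
                         = Hfun_coef (extend_I f) (extend_I g) j * INR (Factorial.fact j)).
  { intros j. rewrite <- Derive_n_coef by exact Hrad. symmetry. apply Derive_n_ext_loc, Hloc. }
  split; [|split].
  - intros j _. apply (ex_derive_n_ext_loc _ _ j 0 Hloc), ex_derive_n_PSeries.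
    rewrite Rabs_R0. exact Hrad.
  - intros j Hj. rewrite HD, Hfun_coef_extend_I_le_2 by assumption. ring.
  - rewrite HD, Hfun_coef_extend_I_3 by assumption. ring.
Qed.
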